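(* Let $c$ be a positive integer and $\zeta_c\in\mathbb{C}$ a primitive $c$-th root of unity. For $i,j\in\mathbb{Z}/c\mathbb{Z}$ let $\Theta_c^{i,j}\in\mathbb{Z}[T]$ be the minimal polynomial of $\zeta_c^i+\zeta_c^{-i}+\zeta_c^j+\zeta_c^{-j}$ and $\Delta_c^{i,j}\in\mathbb{Z}[T]$ the minimal polynomial of $\zeta_c^{i+j}+\zeta_c^{i-j}+\zeta_c^{-i+j}+\zeta_c^{-i-j}+2$, and set $\Theta_c=\mathrm{lcm}\{\Theta_c^{i,j}: i,j\in\mathbb{Z}/c\mathbb{Z}\}$, $\Delta_c=\mathrm{lcm}\{\Delta_c^{i,j}: i,j\in\mathbb{Z}/c\mathbb{Z}\}$. Then for every field $\mathbb{F}$ and every $g\in\mathrm{Sp}_4(\mathbb{F})$ of order dividing $c$, we have $\Theta_c(\chi_3(g))=0$ and $\Delta_c(\chi_2(g))=0$ in $\mathbb{F}$.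
   Context: For $M\in\mathrm{M}_4(\mathbb{F})$ write its characteristic polynomial as $T^4-\chi_3(M)T^3+\chi_2(M)T^2-\chi_1(M)T+\chi_0(M)$ (so $\chi_3(M)=\mathrm{tr}(M)$). Polynomials in $\mathbb{Z}[T]$ are evaluated in $\mathbb{F}$ via the canonical map $\mathbb{Z}\to\mathbb{F}$. *)

From HB Require Import structures.
From mathcomp Require Import all_boot all_order all_algebra all_field.
Set Implicit Arguments. Unset Strict Implicit. Unset Printing Implicit Defensive.
Import Order.TTheory GRing.Theory Num.Theory.
Local Open Scope ring_scope.

(* chi k M : coefficients of the characteristic polynomial written as
   T^4 - chi_3 T^3 + chi_2 T^2 - chi_1 T + chi_0, i.e. chi_k = (-1)^k [T^k] char_poly *)
Definition chi (F : fieldType) (k : nat) (M : 'M[F]_4) : F :=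
  (-1) ^+ k * (char_poly M)`_k.

Definition symJ (F : fieldType) : 'M[F]_4 :=
  \matrix_(i < 4, j < 4)
    (if (i + 2 == j)%N then 1 else if (j + 2 == i)%N then -1 else 0).

Definition symplectic (F : fieldType) (g : 'M[F]_4) : Prop :=
  g^T *m symJ F *m g = symJ F.

Definition lcmp2 (p q : {poly algC}) : {poly algC} := (p * q) %/ gcdp p q.
Definition monicize (p : {poly algC}) : {poly algC} := (lead_coef p)^-1 *: p.
Definition lcm_seq (s : seq {poly algC}) : {poly algC} := monicize (foldr lcmp2 1 s).

(* reading a polynomial with integer coefficients in algC as an element of Z[T] *)
Definition polyZ_of (p : {poly algC}) : {poly int} :=
  \poly_(i < size p) Num.floor p`_i.

Definition Theta (c : nat) (z : algC) : {poly int} :=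
  polyZ_of (lcm_seq [seq minCpoly (z ^+ i + z ^- i + z ^+ j + z ^- j)
                    | i : 'I_c <- enum 'I_c, j : 'I_c <- enum 'I_c]).

Definition Delta (c : nat) (z : algC) : {poly int} :=
  polyZ_of (lcm_seq [seq minCpoly (z ^+ i * z ^+ j + z ^+ i * z ^- j
                                   + z ^- i * z ^+ j + z ^- i * z ^- j + 2)
                    | i : 'I_c <- enum 'I_c, j : 'I_c <- enum 'I_c]).

From HB Require Import structures.
From mathcomp Require Import all_boot all_order all_algebra all_field.
From mathcomp Require Import ring.
From Stdlib Require Import Classical.
Set Implicit Arguments. Unset Strict Implicit. Unset Printing Implicit Defensive.
Import Order.TTheory GRing.Theory Num.Theory.
Import Pdiv.CommonRing Pdiv.RingMonic.
Local Open Scope ring_scope.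

(* For symplectic g a Pfaffian computation gives det g = 1, and adj g = g^-1 = -J g^T J has
   trace tr g, so the characteristic polynomial is palindromic:
   T^4 - t T^3 + s T^2 - t T + 1 with t = chi_3 g and s = chi_2 g.  Over an extension field it
   factors as (T^2 - u T + 1) (T^2 - (t - u) T + 1), hence t = x + 1/x + y + 1/y and
   s = (x + 1/x) (y + 1/y) + 2 for two eigenvalues x, y, which are c-th roots of unity.
   Writing 1/x as x^(c-1), Theta_c(t) becomes the value at (x, y) of an integer polynomial
   Q(X, Y), where Theta_c has integer coefficients because it is a monic lcm of minimal
   polynomials of algebraic integers.  By construction Q vanishes at every pair of complex
   c-th roots of unity (zeta^i, zeta^j); reducing Q modulo X^c - 1 and Y^c - 1 leaves degrees
   < c in both variables, so the reduction is zero, and Q vanishes at every pair of c-th roots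
   of unity in any commutative ring.  The same argument applies to Delta_c(s). *)

Section SmallDeterminants.
Variable R : comNzRingType.
Implicit Types f : nat -> nat -> R.

Definition minor2 f r1 r2 c1 c2 := f r1 c1 * f r2 c2 - f r1 c2 * f r2 c1.
Arguments minor2 f (r1 r2 c1 c2)%_N.

Definition minor3 f r1 r2 r3 c1 c2 c3 :=
  f r1 c1 * minor2 f r2 r3 c2 c3 - f r1 c2 * minor2 f r2 r3 c1 c3
  + f r1 c3 * minor2 f r2 r3 c1 c2.
Arguments minor3 f (r1 r2 r3 c1 c2 c3)%_N.

Definition minor4 f :=
  f 0%N 0%N * minor3 f 1 2 3 1 2 3 - f 0%N 1%N * minor3 f 1 2 3 0 2 3
  + f 0%N 2%N * minor3 f 1 2 3 0 1 3 - f 0%N 3%N * minor3 f 1 2 3 0 1 2.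

Definition submx_fun f i j : nat -> nat -> R := fun a b => f (bump i a) (bump j b).

Lemma cofactor_mx n f (i j : 'I_n.+1) :
  cofactor (\matrix_(a, b) f a b) i j =
  (-1) ^+ (i + j) * \det (\matrix_(k < n, l < n) submx_fun f i j k l).
Proof. by rewrite /cofactor; congr (_ * \det _); apply/matrixP => k l; rewrite !mxE. Qed.

Lemma det_mx_expand_row0 n f :
  \det (\matrix_(i < n.+1, j < n.+1) f i j) =
  \sum_(j < n.+1) f 0 j * (-1) ^+ j * \det (\matrix_(k < n, l < n) submx_fun f 0 j k l).
Proof.
rewrite (expand_det_row _ ord0); apply: eq_bigr => j _.
by rewrite cofactor_mx mxE mulrA.
Qed.

Lemma det_mx22 f : \det (\matrix_(i < 2, j < 2) f i j) = minor2 f 0 1 0 1.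
Proof.
by rewrite det_mx_expand_row0 !big_ord_recl big_ord0 !det_mx11 !mxE /= /submx_fun /minor2; ring.
Qed.

Lemma det_mx33 f : \det (\matrix_(i < 3, j < 3) f i j) = minor3 f 0 1 2 0 1 2.
Proof.
rewrite det_mx_expand_row0 !big_ord_recl big_ord0 !det_mx22 /=.
by rewrite /submx_fun /minor3 /minor2 /=; ring.
Qed.

Lemma det_mx44 f : \det (\matrix_(i < 4, j < 4) f i j) = minor4 f.
Proof.
rewrite det_mx_expand_row0 !big_ord_recl big_ord0 !det_mx33 /=.
by rewrite /submx_fun /minor4 /minor3 /minor2 /=; ring.
Qed.

(* Reading entries at nat indices turns determinants of concrete size into ring identities
   in the atoms [ent A i j]. *)
Definition ent n (A : 'M[R]_n.+1) i j := A (inord i) (inord j).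
Arguments ent n A (i j)%_N.

Lemma mx_ent n (A : 'M[R]_n.+1) : A = \matrix_(i, j) ent A i j.
Proof. by apply/matrixP => i j; rewrite mxE /ent !inord_val. Qed.

Lemma det4E (A : 'M[R]_4) : \det A = minor4 (ent A).
Proof. by rewrite {1}[A]mx_ent det_mx44. Qed.

Definition principal_minors2 f :=
  minor2 f 0 1 0 1 + minor2 f 0 2 0 2 + minor2 f 0 3 0 3
  + minor2 f 1 2 1 2 + minor2 f 1 3 1 3 + minor2 f 2 3 2 3.

Definition principal_minors3 f :=
  minor3 f 1 2 3 1 2 3 + minor3 f 0 2 3 0 2 3
  + minor3 f 0 1 3 0 1 3 + minor3 f 0 1 2 0 1 2.

Lemma mxtrace4E (A : 'M[R]_4) : \tr A = ent A 0 0 + ent A 1 1 + ent A 2 2 + ent A 3 3.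
Proof. by rewrite {1}[A]mx_ent /mxtrace !big_ord_recl big_ord0 !mxE /= addr0 !addrA. Qed.

Lemma mxtrace_adj4 (A : 'M[R]_4) : \tr (\adj A) = principal_minors3 (ent A).
Proof.
rewrite {1}[A]mx_ent /mxtrace !big_ord_recl big_ord0 !mxE !cofactor_mx !det_mx33 /=.
by rewrite /submx_fun /principal_minors3 /minor3 /minor2 /=; ring.
Qed.

End SmallDeterminants.

Lemma char_poly4 (R : comNzRingType) (A : 'M[R]_4) : char_poly A =
  Poly [:: \det A; - \tr (\adj A); principal_minors2 (ent A); - \tr A; 1].
Proof.
rewrite /char_poly; pose f i j := 'X *+ (i == j)%N - (ent A i j)%:P.
have -> : char_poly_mx A = \matrix_(i, j) f i j.
  by apply/matrixP => i j; rewrite !mxE /f /ent !inord_val.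
rewrite det_mx44 mxtrace_adj4 mxtrace4E det4E.
rewrite /f /minor4 /principal_minors3 /principal_minors2 /minor3 /minor2 /=.
rewrite !cons_poly_def mul0r add0r; ring.
Qed.

Section Symplectic.
Variable F : fieldType.
Implicit Types g : 'M[F]_4.

Lemma symJ_sqr : symJ F *m symJ F = - 1%:M.
Proof.
apply/matrixP => -[[|[|[|[|//]]]] ?] -[[|[|[|[|//]]]] ?];
by rewrite !mxE !big_ord_recl big_ord0 !mxE /=; ring.
Qed.

Lemma symplectic_form_ent g k l : (k < 4)%N -> (l < 4)%N ->
  ent (g^T *m symJ F *m g) k l =
  ent g 0 k * ent g 2 l + ent g 1 k * ent g 3 l
  - ent g 2 k * ent g 0 l - ent g 3 k * ent g 1 l.
Proof.
move=> ltk4 ltl4; rewrite {1}/ent [g in LHS]mx_ent.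
by rewrite !(mxE, big_ord_recl, big_ord0) /= !inordK // /bump /=; ring.
Qed.

Definition pfaffian4 (f : nat -> nat -> F) :=
  f 0%N 1%N * f 2%N 3%N - f 0%N 2%N * f 1%N 3%N + f 0%N 3%N * f 1%N 2%N.

(* Pf(g^T J g) = det g * Pf(J), and Pf(J) = -1. *)
Lemma pfaffian4_symplectic_form g : pfaffian4 (ent (g^T *m symJ F *m g)) = - \det g.
Proof. by rewrite /pfaffian4 !symplectic_form_ent // det4E /minor4 /minor3 /minor2; ring. Qed.

Lemma symplectic_det g : symplectic g -> \det g = 1.
Proof.
move=> sg; apply: oppr_inj; rewrite -pfaffian4_symplectic_form sg /pfaffian4 /ent !mxE.
by rewrite !inordK //=; ring.
Qed.

(* Since det g = 1, adj g = g^-1 = -J g^T J, whose trace is tr g^T. *)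
Lemma symplectic_tr_adj g : symplectic g -> \tr (\adj g) = \tr g.
Proof.
move=> sg; pose h := - (symJ F *m g^T *m symJ F).
have hg : h *m g = 1%:M.
  by rewrite /h mulNmx -!mulmxA (mulmxA g^T) sg symJ_sqr opprK.
have -> : \adj g = h.
  by rewrite -[\adj g]mulmx1 -(mulmx1C hg) mulmxA mul_adj_mx symplectic_det // mul1mx.
rewrite /h linearN /= -mulmxA mxtrace_mulC -mulmxA symJ_sqr mulmxN mulmx1 linearN opprK.
exact: mxtrace_tr.
Qed.

Lemma symplectic_char_poly g : symplectic g ->
  char_poly g = Poly [:: 1; - chi 3 g; chi 2 g; - chi 3 g; 1].
Proof.
move=> sg; rewrite /chi char_poly4 symplectic_det // symplectic_tr_adj // !coef_Poly /=.
by congr (cons_poly _ (cons_poly _ (cons_poly _ (cons_poly _ _)))); ring.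
Qed.

End Symplectic.

Lemma monic_irreducible_factor (K : fieldType) (p : {poly K}) : (1 < size p)%N ->
  exists2 h : {poly K}, monic_irreducible_poly h & h %| p.
Proof.
(* Irreducibility is not decidable over an arbitrary field, hence the classical case split. *)
elim: {p}(size p) {-2}p (leqnn (size p)) => [|n IHn] p le_p_n gt1_p.
  by move: (leq_trans gt1_p le_p_n).
have nz_p : p != 0 by rewrite -size_poly_gt0 (ltn_trans _ gt1_p).
have [irr_p | red_p] := classic (irreducible_poly p).
  have lc_p : lead_coef p != 0 by rewrite lead_coef_eq0.
  exists ((lead_coef p)^-1 *: p); last by rewrite dvdpZl ?invr_eq0.
  split; last by rewrite monicE lead_coefZ mulVf.
  split; first by rewrite size_scale ?invr_eq0.
  move=> q q_neq1; rewrite dvdpZr ?invr_eq0 // => /(apply_irredp irr_p q_neq1) eq_qp.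
  by rewrite (eqp_trans eq_qp) // eqp_sym eqp_scale ?invr_eq0.
have [q [q_neq1 dvd_qp not_eq_qp]] :
    exists q : {poly K}, [/\ size q != 1%N, q %| p & ~~ (q %= p)].
  apply: NNPP => no_q; apply: red_p; split => // q q_neq1 dvd_qp.
  by apply: NNPP => not_eq_qp; apply: no_q; exists q; split => //; apply/negP.
have nz_q : q != 0 by apply: contraNneq nz_p => q0; rewrite q0 dvd0p in dvd_qp.
have lt_qp : (size q < size p)%N by rewrite ltn_neqAle dvdp_leq // andbT dvdp_size_eqp.
have gt1_q : (1 < size q)%N by rewrite ltn_neqAle eq_sym q_neq1 size_poly_gt0.
have [h irr_h dvd_hq] := IHn q (leq_trans lt_qp le_p_n) gt1_q.
by exists h; last exact: dvdp_trans dvd_qp.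
Qed.

Lemma root_in_extension (K : fieldType) (p : {poly K}) : (1 < size p)%N ->
  exists (L : fieldType) (f : {rmorphism K -> L}) (x : L), root (map_poly f p) x.
Proof.
move=> gt1_p; have [h irr_h /dvdpP[q ->]] := monic_irreducible_factor gt1_p.
pose f : {rmorphism K -> {poly %/ h with irr_h}} := qfpoly_const irr_h.
exists {poly %/ h with irr_h}, f, 'qX; rewrite rmorphM rootM; apply/orP; right.
have := in_qpoly_comp_horner h h 'X; rewrite comp_polyXr /root => <-.
apply/eqP/val_inj; rewrite /= /in_qpoly /= mk_monicE //.
exact: rmodpp (snd irr_h).
Qed.

Lemma quadratic_root_in_extension (K : fieldType) (b a : K) :
  exists (L : fieldType) (f : {rmorphism K -> L}) (x : L), x ^+ 2 - f b * x + f a = 0.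
Proof.
have gt1_p : (1 < size (Poly [:: a; - b; 1%R]))%N by rewrite (@PolyK _ 1%R) //= oner_eq0.
have [L [f [x]]] := root_in_extension gt1_p.
rewrite map_Poly /root horner_Poly /= rmorph1 rmorphN => /eqP root_x.
by exists L, f, x; rewrite -root_x; ring.
Qed.

Lemma reciprocal_sum (L : fieldType) (x u : L) :
  x ^+ 2 - u * x + 1 = 0 -> x != 0 /\ x + x^-1 = u.
Proof.
move=> quad_x; have nz_x : x != 0.
  apply/eqP => x0; move: quad_x; rewrite x0 expr0n mulr0 subr0 add0r.
  exact/eqP/oner_neq0.
split=> //; apply: (mulfI nz_x); rewrite mulrDr mulfV // -[RHS]addr0 -quad_x; ring.
Qed.

Lemma palindromic_parametrization (K : fieldType) (t s : K) :
  exists (L : fieldType) (f : {rmorphism K -> L}) (x y : L),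
  [/\ x != 0, y != 0, f t = x + x^-1 + y + y^-1 & f s = (x + x^-1) * (y + y^-1) + 2].
Proof.
(* Take u with u^2 - t u + s - 2 = 0, then x + 1/x = u and y + 1/y = t - u. *)
have [L1 [f1 [u quad_u]]] := quadratic_root_in_extension t (s - 2).
have [L2 [f2 [x quad_x]]] := quadratic_root_in_extension u 1.
have [L3 [f3 [y quad_y]]] := quadratic_root_in_extension (f2 (f1 t - u)) 1.
pose f : {rmorphism K -> L3} := f3 \o f2 \o f1.
have [nz_x sum_x] : f3 x != 0 /\ f3 x + (f3 x)^-1 = f3 (f2 u).
  apply: reciprocal_sum.
  by rewrite -(rmorph0 f3) -quad_x rmorphD rmorphB rmorphXn rmorphM !rmorph1.
have [nz_y sum_y] : y != 0 /\ y + y^-1 = f t - f3 (f2 u).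
  by apply: reciprocal_sum; rewrite -(rmorph1 f3) -quad_y rmorph1 /f /= !rmorphB.
exists L3, f, (f3 x), y; split => //; first by rewrite -addrA sum_y sum_x; ring.
rewrite sum_x sum_y; apply/eqP; rewrite -subr_eq0; apply/eqP.
have := congr1 (f3 \o f2) quad_u; rewrite /f /= !rmorph0 => <-.
by rewrite !(rmorphD, rmorphB, rmorphXn, rmorphM, rmorph_nat); ring.
Qed.

Lemma root_char_poly_unity (L : fieldType) n (A : 'M[L]_n.+1) c x :
  A ^+ c = 1 -> root (char_poly A) x -> x ^+ c = 1.
Proof.
move=> Ac1; rewrite -eigenvalue_root_char => /eigenvalueP[v vA nz_v].
have vAk k : v *m A ^+ k = x ^+ k *: v.
  elim: k => [|k IHk]; first by rewrite !expr0 mulmx1 scale1r.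
  by rewrite !exprSr -mulmxE mulmxA IHk -scalemxAl vA scalerA.
have : (x ^+ c - 1) *: v = 0 by rewrite scalerBl -vAk Ac1 mulmx1 scale1r subrr.
by move/eqP; rewrite scaler_eq0 (negbTE nz_v) orbF subr_eq0 => /eqP.
Qed.

Lemma palindromic_quartic_root (L : fieldType) (x y : L) : x != 0 -> y != 0 ->
  root (Poly [:: 1; - (x + x^-1 + y + y^-1); (x + x^-1) * (y + y^-1) + 2;
                 - (x + x^-1 + y + y^-1); 1]) x.
Proof. by move=> nz_x nz_y; rewrite /root horner_Poly /=; apply/eqP; field; rewrite nz_x nz_y. Qed.

Lemma symplectic_unity_parametrization (F : fieldType) (g : 'M[F]_4) c :
  symplectic g -> g ^+ c = 1 ->
  exists (L : fieldType) (f : {rmorphism F -> L}) (x y : L),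
  [/\ x ^+ c = 1, y ^+ c = 1, f (chi 3 g) = x + x^-1 + y + y^-1
    & f (chi 2 g) = (x + x^-1) * (y + y^-1) + 2].
Proof.
move=> sg gc1.
have [L [f [x [y [nz_x nz_y ft fs]]]]] := palindromic_parametrization (chi 3 g) (chi 2 g).
have gfc1 : map_mx f g ^+ c = 1 by rewrite -rmorphXn gc1 rmorph1.
have cpf : char_poly (map_mx f g) =
    Poly [:: 1; - f (chi 3 g); f (chi 2 g); - f (chi 3 g); 1].
  by rewrite -map_char_poly symplectic_char_poly // map_Poly /= rmorph1 !rmorphN.
exists L, f, x, y; split => //.
- by apply: root_char_poly_unity gfc1 _; rewrite cpf ft fs palindromic_quartic_root.
- apply: root_char_poly_unity gfc1 _; rewrite cpf ft fs.
  have -> : x + x^-1 + y + y^-1 = y + y^-1 + x + x^-1 by ring.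
  by rewrite mulrC palindromic_quartic_root.
Qed.

Lemma rmorph_rmodp_Xn_sub1 (R S : nzRingType) (phi : {rmorphism {poly R} -> S}) c p :
  (0 < c)%N -> phi 'X ^+ c = 1 -> phi (rmodp p ('X^c - 1)) = phi p.
Proof.
move=> c_gt0 phiXc; have monic_Xc : ('X^c - 1 : {poly R}) \is monic by exact: monicXnsubC.
rewrite {2}(rdivp_eq monic_Xc p) rmorphD rmorphM.
by rewrite rmorphB rmorphXn rmorph1 phiXc subrr mulr0 add0r.
Qed.

Lemma size_rmodp_Xn_sub1 (R : nzRingType) c (p : {poly R}) :
  (0 < c)%N -> (size (rmodp p ('X^c - 1)) <= c)%N.
Proof.
move=> c_gt0; have size_Xc : size ('X^c - 1 : {poly R}) = c.+1 by exact: size_XnsubC.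
by rewrite -ltnS -size_Xc ltn_rmodpN0 // -size_poly_gt0 size_Xc.
Qed.

Lemma prim_root_poly_eq0 (K : idomainType) (z : K) c (p : {poly K}) :
  c.-primitive_root z -> (size p <= c)%N ->
  (forall i, (i < c)%N -> root p (z ^+ i)) -> p = 0.
Proof.
move=> pz size_p roots_p; apply/eqP; apply: contraTT size_p => nz_p; rewrite -ltnNge.
have uniq_z : uniq (mkseq (fun i => z ^+ i) c).
  rewrite map_inj_in_uniq ?iota_uniq // => i j; rewrite !mem_iota !add0n => lt_ic lt_jc.
  by move/eqP; rewrite (eq_prim_root_expr pz) !modn_small // => /eqP.
rewrite -[X in (X < _)%N](size_mkseq (fun i => z ^+ i)).
apply: max_poly_roots nz_p _ uniq_z.
by apply/allP => w /mapP[i]; rewrite mem_iota add0n => /andP[_ lt_ic] ->; apply: roots_p.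
Qed.

Definition evalZ (K : comNzRingType) (x : K) : {rmorphism {poly int} -> K} :=
  horner_eval x \o map_poly intr.

(* [Q : {poly {poly int}}] is read as a polynomial in Y with coefficients in Z[X]. *)
Definition evalZ2 (K : comNzRingType) (x y : K) : {rmorphism {poly {poly int}} -> K} :=
  horner_eval y \o map_poly (evalZ x).

Lemma evalZE (K : comNzRingType) (x : K) p : evalZ x p = (map_poly intr p).[x].
Proof. by []. Qed.

Lemma evalZ2E (K : comNzRingType) (x y : K) Q : evalZ2 x y Q = (map_poly (evalZ x) Q).[y].
Proof. by []. Qed.

Lemma evalZX (K : comNzRingType) (x : K) : evalZ x 'X = x.
Proof. by rewrite evalZE map_polyX hornerX. Qed.

Lemma evalZ2X (K : comNzRingType) (x y : K) : evalZ2 x y 'X = y.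
Proof. by rewrite evalZ2E map_polyX hornerX. Qed.

Lemma evalZ2C (K : comNzRingType) (x y : K) a : evalZ2 x y a%:P = evalZ x a.
Proof. by rewrite evalZ2E map_polyC hornerC. Qed.

Lemma horner_intr_rmorph (S T : comNzRingType) (f : {rmorphism S -> T}) (P : {poly int}) a :
  (map_poly intr P).[f a] = f (map_poly intr P).[a].
Proof.
rewrite -horner_map -map_poly_comp; congr _.[_]; apply: eq_map_poly => n /=.
by rewrite rmorph_int.
Qed.

Definition unity_reduce c (Q : {poly {poly int}}) : {poly {poly int}} :=
  map_poly (fun a => rmodp a ('X^c - 1)) (rmodp Q ('X^c - 1)).

Section UnityReduce.
Variables (c : nat) (Q : {poly {poly int}}).
Hypothesis c_gt0 : (0 < c)%N.

Lemma evalZ2_unity_reduce (K : comNzRingType) (x y : K) :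
  x ^+ c = 1 -> y ^+ c = 1 -> evalZ2 x y (unity_reduce c Q) = evalZ2 x y Q.
Proof.
move=> xc1 yc1.
rewrite -[RHS](@rmorph_rmodp_Xn_sub1 _ _ _ c Q c_gt0); last by rewrite evalZ2X.
rewrite !evalZ2E -map_poly_comp; congr _.[_]; apply: eq_map_poly => a.
by apply: rmorph_rmodp_Xn_sub1; rewrite ?evalZX.
Qed.

Lemma coef_unity_reduce k :
  (unity_reduce c Q)`_k = rmodp (rmodp Q ('X^c - 1))`_k ('X^c - 1).
Proof. by rewrite coef_map_id0 // rmod0p. Qed.

Lemma size_unity_reduce : (size (unity_reduce c Q) <= c)%N.
Proof. exact: leq_trans (size_poly _ _) (size_rmodp_Xn_sub1 _ c_gt0). Qed.

Lemma unity_reduce_eq0 (K : numDomainType) (z : K) : c.-primitive_root z ->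
  (forall i j, (i < c)%N -> (j < c)%N -> evalZ2 (z ^+ i) (z ^+ j) Q = 0) ->
  unity_reduce c Q = 0.
Proof.
(* Each coefficient, a polynomial of degree < c in X, vanishes at all the z ^+ i. *)
move=> pz Q_eq0; have zc1 i : (z ^+ i) ^+ c = 1 by rewrite exprAC (prim_expr_order pz) expr1n.
have row_eq0 i : (i < c)%N -> map_poly (evalZ (z ^+ i)) (unity_reduce c Q) = 0.
  move=> lt_ic; apply: (prim_root_poly_eq0 pz).
    exact: leq_trans (size_poly _ _) size_unity_reduce.
  by move=> j lt_jc; rewrite /root -evalZ2E evalZ2_unity_reduce // Q_eq0.
apply/polyP => k; rewrite coef0; apply: (map_inj_poly (@intr_inj K) (mulr0z 1)).
rewrite rmorph0; apply: (prim_root_poly_eq0 pz).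
  by rewrite size_map_inj_poly ?coef_unity_reduce ?size_rmodp_Xn_sub1 //; apply: intr_inj.
move=> i lt_ic; rewrite /root -evalZE.
by rewrite -coef_map_id0 ?rmorph0 // row_eq0 // coef0.
Qed.

End UnityReduce.

Lemma evalZ2_unity_eq0 (K : numDomainType) (z : K) c Q :
  (0 < c)%N -> c.-primitive_root z ->
  (forall i j, (i < c)%N -> (j < c)%N -> evalZ2 (z ^+ i) (z ^+ j) Q = 0) ->
  forall (S : comNzRingType) (x y : S), x ^+ c = 1 -> y ^+ c = 1 -> evalZ2 x y Q = 0.
Proof.
move=> c_gt0 pz Q_eq0 S x y xc1 yc1.
by rewrite -(evalZ2_unity_reduce Q c_gt0 xc1 yc1) (unity_reduce_eq0 c_gt0 pz Q_eq0) rmorph0.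
Qed.

Section LcmSeq.
Implicit Types (p q : {poly algC}) (s : seq {poly algC}).

Lemma dvdp_lcmp2l p q : p %| lcmp2 p q.
Proof. by rewrite /lcmp2 -divp_mulA ?dvdp_gcdr // dvdp_mulr. Qed.

Lemma dvdp_lcmp2r p q : q %| lcmp2 p q.
Proof. by rewrite /lcmp2 -divp_mulAC ?dvdp_gcdl // dvdp_mull. Qed.

Lemma lcmp2_dvdp_mul p q : lcmp2 p q %| p * q.
Proof. by rewrite /lcmp2 -divp_mulA ?dvdp_gcdr // dvdp_mul // divp_dvd ?dvdp_gcdr. Qed.

Lemma dvdp_foldr_lcmp2 s p : p \in s -> p %| foldr lcmp2 1 s.
Proof.
elim: s => //= q s IHs; rewrite in_cons => /predU1P[-> | /IHs dvd_p].
  exact: dvdp_lcmp2l.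
exact: dvdp_trans dvd_p (dvdp_lcmp2r _ _).
Qed.

Lemma foldr_lcmp2_dvdp_prod s : foldr lcmp2 1 s %| \prod_(p <- s) p.
Proof.
elim: s => [|q s IHs] /=; first by rewrite big_nil.
by rewrite big_cons (dvdp_trans (lcmp2_dvdp_mul _ _)) // dvdp_mul.
Qed.

Lemma foldr_lcmp2_rat s : {in s, forall p, exists r : {poly rat}, p = map_poly ratr r} ->
  exists r : {poly rat}, foldr lcmp2 1 s = map_poly ratr r.
Proof.
elim: s => [|p s IHs] rat_s /=; first by exists 1; rewrite rmorph1.
have [a ->] := rat_s p (mem_head _ _).
have [b ->] : exists b, foldr lcmp2 1 s = map_poly ratr b.
  by apply: IHs => q s_q; apply: rat_s; rewrite in_cons s_q orbT.
by exists (a * b %/ gcdp a b); rewrite /lcmp2 -gcdp_map -rmorphM -map_divp.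
Qed.

Lemma root_lcm_seq s p x : p \in s -> root p x -> root (lcm_seq s) x.
Proof.
move=> s_p root_px; rewrite /lcm_seq /monicize.
have [-> | nz_F] := eqVneq (foldr lcmp2 1 s) 0; first by rewrite scaler0 root0.
by rewrite rootZ ?invr_eq0 ?lead_coef_eq0 // (root_dvdp (dvdp_foldr_lcmp2 s_p)).
Qed.

(* The coefficients are rational, and algebraic integers since each root of the monic lcm is a
   root of the product of the minimal polynomials, which is monic with integer coefficients. *)
Lemma lcm_seq_minCpoly_int (xs : seq algC) : {subset xs <= Aint} ->
  lcm_seq (map minCpoly xs) \is a polyOver Num.int.
Proof.
move=> Aint_xs; set s := map minCpoly xs; set L := lcm_seq s.
have [F0 | nz_F] := eqVneq (foldr lcmp2 1 s) 0.
  by rewrite /L /lcm_seq /monicize F0 scaler0 polyOver0.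
have L_def : L = (lead_coef (foldr lcmp2 1 s))^-1 *: foldr lcmp2 1 s by [].
apply/polyOverP => k; apply: Cint_rat_Aint.
  have [r F_r] : exists r : {poly rat}, foldr lcmp2 1 s = map_poly ratr r.
    apply: foldr_lcmp2_rat => _ /mapP[x _ ->].
    by have [r [-> _] _] := minCpolyP x; exists r.
  by rewrite L_def F_r lead_coef_map -fmorphV -map_polyZ coef_map /= Crat_rat.
have monic_L : L \is monic by rewrite monicE L_def lead_coefZ mulVf ?lead_coef_eq0.
have [rs L_rs] := closed_field_poly_normal L; rewrite (monicP monic_L) scale1r in L_rs.
suff : L \is a polyOver Aint by move/polyOverP.
rewrite {1}L_rs big_seq rpred_prod // => x rs_x; rewrite polyOverXsubC.
have : root L x by rewrite L_rs root_prod_XsubC.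
rewrite L_def rootZ ?invr_eq0 ?lead_coef_eq0 // => /(root_dvdp (foldr_lcmp2_dvdp_prod s)).
move/root_monic_Aint; apply.
  by rewrite big_seq monic_prod // => _ /mapP[y _ ->]; apply: minCpoly_monic.
rewrite big_seq; apply: (big_ind (fun p => p \is a polyOver Num.int)).
- by rewrite polyOverC rpred1.
- exact: polyOver_mulr_2closed.
- by move=> _ /mapP[y xs_y ->]; apply: Aint_xs.
Qed.

End LcmSeq.

Lemma evalZ2_Aint (x y : algC) E : x \in Aint -> y \in Aint -> evalZ2 x y E \in Aint.
Proof.
have evalZ_Aint w p : w \in Aint -> evalZ w p \in Aint.
  move=> Aint_w; rewrite evalZE rpred_horner //.
  by apply/polyOverP => i; rewrite coef_map /= rpred_int.
move=> Aint_x Aint_y; rewrite evalZ2E rpred_horner //.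
by apply/polyOverP => i; rewrite coef_map evalZ_Aint.
Qed.

Lemma polyZ_ofK (p : {poly algC}) :
  p \is a polyOver Num.int -> map_poly intr (polyZ_of p) = p.
Proof. exact: floorpK. Qed.

Lemma lcm_minCpoly_unity_root c (z : algC) E (a : 'I_c -> 'I_c -> algC) :
  (0 < c)%N -> c.-primitive_root z -> (forall i j, a i j = evalZ2 (z ^+ i) (z ^+ j) E) ->
  forall (S : comNzRingType) (x y : S), x ^+ c = 1 -> y ^+ c = 1 ->
  (map_poly intr (polyZ_of (lcm_seq
     [seq minCpoly (a i j) | i <- enum 'I_c, j <- enum 'I_c]))).[evalZ2 x y E] = 0.
Proof.
move=> c_gt0 pz a_def S x y xc1 yc1; rewrite -map_allpairs.
set xs := [seq a i j | i <- enum 'I_c, j <- enum 'I_c].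
have Aint_xs : {subset xs <= Aint}.
  have Aint_z := Aint_prim_root pz.
  by move=> _ /allpairsP[[i j] [_ _ ->]]; rewrite a_def evalZ2_Aint ?rpredX.
rewrite (horner_intr_rmorph (evalZ2 x y)).
apply: (evalZ2_unity_eq0 c_gt0 pz) => // i j lt_ic lt_jc.
rewrite -horner_intr_rmorph polyZ_ofK ?lcm_seq_minCpoly_int //; apply/eqP.
apply: (root_lcm_seq (map_f _ _)) (root_minCpoly _).
by apply/allpairsP; exists (Ordinal lt_ic, Ordinal lt_jc); rewrite !mem_enum a_def.
Qed.

Lemma unity_inv (K : fieldType) c (w : K) : (0 < c)%N -> w ^+ c = 1 -> w^-1 = w ^+ c.-1.
Proof.
move=> c_gt0 wc1; have nz_w : w != 0.
  by apply: contra_eq_neq wc1 => ->; rewrite expr0n gtn_eqF // eq_sym oner_neq0.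
by apply: (mulfI nz_w); rewrite mulfV // -exprS prednK.
Qed.

(* X^(c-1) stands for X^-1, with which it agrees at c-th roots of unity (see [unity_inv]). *)
Definition thetaZ c : {poly {poly int}} := ('X + 'X^(c.-1))%:P + ('X + 'X^(c.-1)).
Definition deltaZ c : {poly {poly int}} := ('X + 'X^(c.-1))%:P * ('X + 'X^(c.-1)) + 2.

Lemma evalZ2_thetaZ (S : comNzRingType) (x y : S) c :
  evalZ2 x y (thetaZ c) = x + x ^+ c.-1 + (y + y ^+ c.-1).
Proof. by rewrite rmorphD evalZ2C !rmorphD !rmorphXn evalZX evalZ2X. Qed.

Lemma evalZ2_deltaZ (S : comNzRingType) (x y : S) c :
  evalZ2 x y (deltaZ c) = (x + x ^+ c.-1) * (y + y ^+ c.-1) + 2.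
Proof. by rewrite rmorphD rmorphM evalZ2C !rmorphD !rmorphXn evalZX evalZ2X rmorph1. Qed.

Theorem mainTheorem13 (c : nat) (z : algC) (F : fieldType) (g : 'M[F]_4) :
  (0 < c)%N -> c.-primitive_root z ->
  symplectic g -> g ^+ c = 1 ->
  (map_poly intr (Theta c z)).[chi 3 g] = 0 /\
  (map_poly intr (Delta c z)).[chi 2 g] = 0.
Proof.
move=> c_gt0 pz sg gc1.
have [L [f [x [y [xc1 yc1 f_chi3 f_chi2]]]]] := symplectic_unity_parametrization sg gc1.
have zc1 i : (z ^+ i) ^+ c = 1 by rewrite exprAC (prim_expr_order pz) expr1n.
split; apply: (fmorph_inj f); rewrite rmorph0 -horner_intr_rmorph.
- rewrite f_chi3 -addrA !(unity_inv c_gt0) // -evalZ2_thetaZ.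
  apply: (lcm_minCpoly_unity_root c_gt0 pz) => // i j.
  by rewrite evalZ2_thetaZ -!(unity_inv c_gt0) ?zc1 // addrA.
- rewrite f_chi2 !(unity_inv c_gt0) // -evalZ2_deltaZ.
  apply: (lcm_minCpoly_unity_root c_gt0 pz) => // i j.
  by rewrite evalZ2_deltaZ -!(unity_inv c_gt0) ?zc1 //; ring.
Qed.
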